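(* For all pure $\lambda$-terms $v, v'$: $v \Downarrow_h v'$ if and only if $v \Downarrow_{sf} v'$.
   Context: Pure $\lambda$-terms: $v ::= x \mid v\,v \mid \lambda x.v$, with capture-avoiding substitution; ''$u \not\equiv \lambda x.w$'' means $u$ is not a $\lambda$-abstraction. Weak-head big-step relation $\Downarrow_{wh}$, inductively defined by: $x \Downarrow_{wh} x$; $\lambda x.v \Downarrow_{wh} \lambda x.v$; if $v_1 \Downarrow_{wh} \lambda x.v_1'$ and $v_1'[v_2/x] \Downarrow_{wh} v$ then $v_1\,v_2 \Downarrow_{wh} v$; if $v_1 \Downarrow_{wh} v_1'$ and $v_1' \not\equiv \lambda x.w$ then $v_1\,v_2 \Downarrow_{wh} v_1'\,v_2$. Head big-step relation $\Downarrow_h$: if $v \Downarrow_{wh} \lambda x.v'$ and $v' \Downarrow_h v''$ then $v \Downarrow_h \lambda x.v''$; if $v \Downarrow_{wh} v'$ and $v' \not\equiv \lambda x.w$ then $v \Downarrow_h v'$. Sestoft's head big-step relation $\Downarrow_{sf}$: $x \Downarrow_{sf} x$; if $v \Downarrow_{sf} v'$ then $\lambda x.v \Downarrow_{sf} \lambda x.v'$; if $v_1 \Downarrow_{wh} v_1'$ and $v_1' \not\equiv \lambda x.w$ then $v_1\,v_2 \Downarrow_{sf} v_1'\,v_2$; if $v_1 \Downarrow_{wh} \lambda x.v_1'$ and $v_1'[v_2/x] \Downarrow_{sf} v$ then $v_1\,v_2 \Downarrow_{sf} v$. *)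

(* Pure lambda-terms in de Bruijn representation
   (terms identified up to alpha-conversion; capture-avoiding
   substitution is the standard de Bruijn shift/substitution). *)
From Stdlib Require Import Arith.

Inductive term : Type :=
| Var : nat -> term
| App : term -> term -> term
| Lam : term -> term.

Fixpoint lift (k c : nat) (t : term) : term :=
  match t with
  | Var n => if Nat.ltb n c then Var n else Var (n + k)
  | App t1 t2 => App (lift k c t1) (lift k c t2)
  | Lam t1 => Lam (lift k (S c) t1)
  end.

(* subst_at j s t : substitute s for index j in t, decrementing indices > j.
   s is assumed to live in the context outside the j binders, so it is
   lifted by j when inserted. *)
Fixpoint subst_at (j : nat) (s : term) (t : term) : term :=
  match t with
  | Var n =>
      match Nat.compare n j with
      | Lt => Var n
      | Eq => lift j 0 s
      | Gt => Var (pred n)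
      end
  | App t1 t2 => App (subst_at j s t1) (subst_at j s t2)
  | Lam t1 => Lam (subst_at (S j) s t1)
  end.

(* beta-substitution: for Lam b, b[s/x] is subst0 s b *)
Definition subst0 (s b : term) : term := subst_at 0 s b.

Definition is_lam (t : term) : Prop :=
  match t with Lam _ => True | _ => False end.

Inductive wh : term -> term -> Prop :=
| wh_var : forall n, wh (Var n) (Var n)
| wh_lam : forall b, wh (Lam b) (Lam b)
| wh_beta : forall v1 v2 b v,
    wh v1 (Lam b) -> wh (subst0 v2 b) v -> wh (App v1 v2) v
| wh_stuck : forall v1 v2 v1',
    wh v1 v1' -> ~ is_lam v1' -> wh (App v1 v2) (App v1' v2).

Inductive hd : term -> term -> Prop :=
| hd_lam : forall v b b', wh v (Lam b) -> hd b b' -> hd v (Lam b')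
| hd_nolam : forall v v', wh v v' -> ~ is_lam v' -> hd v v'.

Inductive sf : term -> term -> Prop :=
| sf_var : forall n, sf (Var n) (Var n)
| sf_lam : forall b b', sf b b' -> sf (Lam b) (Lam b')
| sf_stuck : forall v1 v2 v1',
    wh v1 v1' -> ~ is_lam v1' -> sf (App v1 v2) (App v1' v2)
| sf_beta : forall v1 v2 b v,
    wh v1 (Lam b) -> sf (subst0 v2 b) v -> sf (App v1 v2) v.

(* Both relations first weak-head evaluate and then recurse under the
   resulting abstraction; they differ only in that [sf] interleaves the
   weak-head steps with its own rules. Since [wh] is deterministic and its
   results are fixed points of [wh], an [sf] derivation from a weak-head
   normal form [w] can be prefixed by any evaluation [v ⇓wh w]; conversely
   an [hd] derivation only depends on the weak-head normal form of its
   source, so it is invariant under the beta step of [sf]. *)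

Lemma wh_deterministic v w1 w2 : wh v w1 -> wh v w2 -> w1 = w2.
Proof.
  intros H1; revert w2.
  induction H1 as [n | b | v1 v2 b w _ IHfun _ IHbody | v1 v2 v1' _ IHfun Hnl];
    intros w2 H2.
  - inversion H2; reflexivity.
  - inversion H2; reflexivity.
  - inversion H2 as [| | u1 u2 b' u Hfun' Hbody' | u1 u2 u1' Hfun' Hnl']; subst.
    + injection (IHfun _ Hfun') as <-.
      exact (IHbody _ Hbody').
    + rewrite <- (IHfun _ Hfun') in Hnl'.
      contradiction Hnl'; exact I.
  - inversion H2 as [| | u1 u2 b' u Hfun' Hbody' | u1 u2 u1' Hfun' Hnl']; subst.
    + rewrite (IHfun _ Hfun') in Hnl.
      contradiction Hnl; exact I.
    + rewrite (IHfun _ Hfun'); reflexivity.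
Qed.

Lemma wh_result_fixed v w : wh v w -> wh w w.
Proof.
  induction 1; try constructor; assumption.
Qed.

Lemma sf_wh_expand v w r : wh v w -> sf w r -> sf v r.
Proof.
  intros Hvw; revert r.
  induction Hvw as [n | b | v1 v2 b w Hfun _ Hbody IHbody
                   | v1 v2 v1' Hfun _ Hnl]; intros r Hr.
  - exact Hr.
  - exact Hr.
  - exact (sf_beta _ _ _ _ Hfun (IHbody r Hr)).
  - assert (Hfix : wh v1' v1') by exact (wh_result_fixed _ _ Hfun).
    inversion Hr as [| | u1 u2 u1' Hu Hunl | u1 u2 b' u Hu Hbody]; subst.
    + rewrite <- (wh_deterministic _ _ _ Hfix Hu).
      exact (sf_stuck _ _ _ Hfun Hnl).
    + rewrite (wh_deterministic _ _ _ Hfix Hu) in Hnl.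
      contradiction Hnl; exact I.
Qed.

Lemma sf_wh_neutral v w : wh v w -> ~ is_lam w -> sf w w.
Proof.
  induction 1 as [n | b | v1 v2 b w _ _ _ IHbody | v1 v2 v1' Hfun _ Hnl];
    intros Hw.
  - constructor.
  - contradiction Hw; exact I.
  - exact (IHbody Hw).
  - exact (sf_stuck _ _ _ (wh_result_fixed _ _ Hfun) Hnl).
Qed.

Lemma hd_wh_transfer u t r :
  (forall w, wh u w -> wh t w) -> hd u r -> hd t r.
Proof.
  intros Hut Hur; destruct Hur as [u b b' Hlam Hbody | u w Hw Hnl].
  - exact (hd_lam _ _ _ (Hut _ Hlam) Hbody).
  - exact (hd_nolam _ _ (Hut _ Hw) Hnl).
Qed.

Lemma hd_sf v r : hd v r -> sf v r.
Proof.
  induction 1 as [v b b' Hlam _ IHbody | v v' Hv Hnl].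
  - exact (sf_wh_expand _ _ _ Hlam (sf_lam _ _ IHbody)).
  - exact (sf_wh_expand _ _ _ Hv (sf_wh_neutral _ _ Hv Hnl)).
Qed.

Lemma sf_hd v r : sf v r -> hd v r.
Proof.
  induction 1 as [n | b b' _ IHbody | v1 v2 v1' Hfun Hnl
                 | v1 v2 b r Hfun _ IHbody].
  - apply hd_nolam; [constructor | intros []].
  - exact (hd_lam _ _ _ (wh_lam b) IHbody).
  - apply hd_nolam; [exact (wh_stuck _ v2 _ Hfun Hnl) | intros []].
  - apply (hd_wh_transfer _ _ _ (fun w Hw => wh_beta _ _ _ _ Hfun Hw) IHbody).
Qed.

Theorem theorem5 : forall v v' : term, hd v v' <-> sf v v'.
Proof.
  intros v v'; split; [apply hd_sf | apply sf_hd].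
Qed.
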